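(* Let $f_j(x,t)$ ($0\le j\le n+1$), $\psi_l(x,t)$, $\varphi_m(x,t)$ ($0\le l,m\le n$) be a compatible local solution of the two autonomous systems of ODEs (in $t$ and in $x$) described in the context, where the functions $a,b,c,d$ appearing in them are given by $$a=\frac{\psi_n}{f_{n+1}},\qquad b=-\frac{\varphi_n}{f_{n+1}},\qquad c=2i\left(\frac{\psi_nf_n}{f^2_{n+1}}-\frac{\psi_{n-1}}{f_{n+1}}\right),\qquad d=2i\left(\frac{\varphi_nf_n}{f^2_{n+1}}-\frac{\varphi_{n-1}}{f_{n+1}}\right).$$ Then the functions $a(x,t)$ and $b(x,t)$ are a local, infinitely differentiable in $x$ and $t$, solution of the nonlinear system $$i\dot a+a''+2a^2b=0,\qquad i\dot b-b''-2b^2a=0,$$ where the dot denotes $\partial/\partial t$ and the prime denotes $\partial/\partial x$.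
   Context: Fix $n\in\mathbb{N}$. One seeks polynomial-in-$z$ solutions $f(x,t,z)=\sum_{j=0}^{n+1}f_j(x,t)z^j$, $\psi(x,t,z)=\sum_{j=0}^{n}\psi_j(x,t)z^j$, $\varphi(x,t,z)=\sum_{j=0}^{n}\varphi_j(x,t)z^j$ of the linear systems $\dot f=(d+2izb)\psi-(c-2iza)\varphi$, $\dot\psi=-2(c-2iza)f-2i(2z^2-ab)\psi$, $\dot\varphi=2(d+2izb)f+2i(2z^2-ab)\varphi$, and $f'=ib\psi+ia\varphi$, $\psi'=2iaf-2iz\psi$, $\varphi'=2ibf+2iz\varphi$, with dot $=\partial_t$ and prime $=\partial_x$. In terms of coefficients (with the convention $f_j,\psi_l,\varphi_m=0$ for negative indices and for $j>n+1$, $l,m>n$) these become the $t$-system $\dot f_j=d\psi_j-c\varphi_j+2ib\psi_{j-1}+2ia\varphi_{j-1}$ ($0\le j\le n+1$), $\dot\psi_l=-2cf_l+4iaf_{l-1}+2iab\psi_l-4i\psi_{l-2}$ ($0\le l\le n$), $\dot\varphi_m=2df_m+4ibf_{m-1}-2iab\varphi_m+4i\varphi_{m-2}$ ($0\le m\le n$), and the $x$-system $f_j'=ib\psi_j+ia\varphi_j$ ($0\le j\le n+1$), $\psi_l'=2iaf_l-2i\psi_{l-1}$ ($0\le l\le n$), $\varphi_m'=2ibf_m+2i\varphi_{m-1}$ ($0\le m\le n$). Requiring polynomial solutions forces $a,b,c,d$ to be given by the formulas in the claim; substituting them, both systems become closed autonomous ODE systems in the $N+1=3n+2$ unknowns $(f_0,\dots,f_{n+1},\psi_0,\dots,\psi_n,\varphi_0,\dots,\varphi_n)$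 with polynomial right-hand sides. The two systems satisfy the Frobenius compatibility conditions, so they admit a common (compatible) local solution. A consequence of the systems is that $f_{n+1}$ is constant in $x$ and $t$. *)

From Stdlib Require Import Reals List.
From Coquelicot Require Import Coquelicot.
Open Scope R_scope.
Open Scope list_scope.

(* Direction of a partial derivative: Px = d/dx (prime), Pt = d/dt (dot). *)
Inductive dir : Type := Px | Pt.

Definition is_partial (d : dir) (F : R -> R -> C) (x t : R) (l : C) : Prop :=
  match d with
  | Px => is_derive (fun s => F s t) x l
  | Pt => is_derive (fun s => F x s) t l
  end.

Definition open2 (U : R -> R -> Prop) : Prop :=
  forall x t, U x t -> exists eps : R, 0 < eps /\
    forall x' t', Rabs (x' - x) < eps -> Rabs (t' - t) < eps -> U x' t'.

(* [smooth_family U F D] : D ds is the iterated partial derivative of F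
   along the list of directions ds (the head of the list is applied last),
   and all of these exist on U.  Hence F is infinitely differentiable in x
   and t on U (all mixed partial derivatives of all orders exist). *)
Definition smooth_family (U : R -> R -> Prop) (F : R -> R -> C)
    (D : list dir -> R -> R -> C) : Prop :=
  (forall x t, U x t -> D nil x t = F x t) /\
  (forall ds d x t, U x t -> is_partial d (D ds) x t (D (d :: ds) x t)).

(* Truncated coefficient access: [coef N g j k x t] is g_{j-k}(x,t) if
   0 <= j-k <= N, and 0 otherwise (convention for negative / too large indices). *)
Definition coef (N : nat) (g : nat -> R -> R -> C) (j k : nat) (x t : R) : C :=
  if andb (Nat.leb k j) (Nat.leb (j - k) N) then g (j - k)%nat x t else RtoC 0.

Open Scope C_scope.

Definition coef_a (n : nat) (f psi : nat -> R -> R -> C) (x t : R) : C :=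
  coef n psi n 0 x t / f (S n) x t.
Definition coef_b (n : nat) (f phi : nat -> R -> R -> C) (x t : R) : C :=
  - (coef n phi n 0 x t / f (S n) x t).
Definition coef_c (n : nat) (f psi : nat -> R -> R -> C) (x t : R) : C :=
  2 * Ci * (coef n psi n 0 x t * f n x t / (f (S n) x t * f (S n) x t)
            - coef n psi n 1 x t / f (S n) x t).
Definition coef_d (n : nat) (f phi : nat -> R -> R -> C) (x t : R) : C :=
  2 * Ci * (coef n phi n 0 x t * f n x t / (f (S n) x t * f (S n) x t)
            - coef n phi n 1 x t / f (S n) x t).

Definition t_system (n : nat) (f psi phi : nat -> R -> R -> C) (x t : R) : Prop :=
  let a := coef_a n f psi x t in
  let b := coef_b n f phi x t in
  let c := coef_c n f psi x t in
  let d := coef_d n f phi x t in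
  (forall j, (j <= S n)%nat ->
     is_partial Pt (f j) x t
       (d * coef n psi j 0 x t - c * coef n phi j 0 x t
        + 2 * Ci * b * coef n psi j 1 x t + 2 * Ci * a * coef n phi j 1 x t)) /\
  (forall l, (l <= n)%nat ->
     is_partial Pt (psi l) x t
       (- 2 * c * coef (S n) f l 0 x t + 4 * Ci * a * coef (S n) f l 1 x t
        + 2 * Ci * a * b * coef n psi l 0 x t - 4 * Ci * coef n psi l 2 x t)) /\
  (forall m, (m <= n)%nat ->
     is_partial Pt (phi m) x t
       (2 * d * coef (S n) f m 0 x t + 4 * Ci * b * coef (S n) f m 1 x t
        - 2 * Ci * a * b * coef n phi m 0 x t + 4 * Ci * coef n phi m 2 x t)).

Definition x_system (n : nat) (f psi phi : nat -> R -> R -> C) (x t : R) : Prop :=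
  let a := coef_a n f psi x t in
  let b := coef_b n f phi x t in
  (forall j, (j <= S n)%nat ->
     is_partial Px (f j) x t
       (Ci * b * coef n psi j 0 x t + Ci * a * coef n phi j 0 x t)) /\
  (forall l, (l <= n)%nat ->
     is_partial Px (psi l) x t
       (2 * Ci * a * coef (S n) f l 0 x t - 2 * Ci * coef n psi l 1 x t)) /\
  (forall m, (m <= n)%nat ->
     is_partial Px (phi m) x t
       (2 * Ci * b * coef (S n) f m 0 x t + 2 * Ci * coef n phi m 1 x t)).

(* The x- and t-systems express the partial derivatives of every unknown as polynomials in
   the unknowns and a, b, c, d, which are themselves polynomials in the unknowns and
   1/f_{n+1}; moreover f_{n+1} is constant.  Hence polynomial expressions in psi_{n-k},
   phi_{n-k}, f_{n-k} and 1/f_{n+1} form an algebra closed under both partial derivatives,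
   so a = psi_n/f_{n+1} and b = -phi_n/f_{n+1} are infinitely differentiable, their
   derivatives being given by formal differentiation.  The two equations then reduce to
   identities between rational functions of the top coefficients. *)

From Stdlib Require Import Reals List Lia Psatz.
From Coquelicot Require Import Coquelicot.
Open Scope list_scope.
Open Scope C_scope.

Lemma is_derive_eq_val {V : NormedModule R_AbsRing} (F : R -> V) (x : R) (l l' : V) :
  is_derive F x l -> l = l' -> is_derive F x l'.
Proof. now intros H <-. Qed.

Lemma is_derive_Re (F : R -> C) (x : R) (l : C) :
  is_derive F x l -> is_derive (fun s => Re (F s)) x (Re l).
Proof.
intros HF. eapply filterdiff_ext_lin.
- apply (filterdiff_comp' F fst); [exact HF | apply filterdiff_linear, is_linear_fst].
- reflexivity.
Qed.

Lemma is_derive_Im (F : R -> C) (x : R) (l : C) :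
  is_derive F x l -> is_derive (fun s => Im (F s)) x (Im l).
Proof.
intros HF. eapply filterdiff_ext_lin.
- apply (filterdiff_comp' F snd); [exact HF | apply filterdiff_linear, is_linear_snd].
- reflexivity.
Qed.

Lemma is_derive_C_parts (F : R -> C) (x : R) (l : C) :
  is_derive (fun s => Re (F s)) x (Re l) -> is_derive (fun s => Im (F s)) x (Im l) ->
  is_derive F x l.
Proof.
intros HRe HIm.
assert (H := is_derive_plus _ _ _ _ _
  (is_derive_scal_l (V := C_R_NormedModule) _ x _ (RtoC 1) HRe)
  (is_derive_scal_l (V := C_R_NormedModule) _ x _ Ci HIm)).
eapply is_derive_ext; [|eapply is_derive_eq_val; [exact H|]].
- intros s. cbn. destruct (F s). apply injective_projections; cbn; ring.
- destruct l. apply injective_projections; cbn; ring.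
Qed.

Lemma is_derive_Cmult (F G : R -> C) (x : R) (dF dG : C) :
  is_derive F x dF -> is_derive G x dG ->
  is_derive (fun s => F s * G s) x (dF * G x + F x * dG).
Proof.
intros HF HG.
assert (HF1 := is_derive_Re _ _ _ HF). assert (HF2 := is_derive_Im _ _ _ HF).
assert (HG1 := is_derive_Re _ _ _ HG). assert (HG2 := is_derive_Im _ _ _ HG).
apply is_derive_C_parts.
- eapply is_derive_eq_val.
  + exact (is_derive_minus _ _ _ _ _ (Derive.is_derive_mult _ _ _ _ _ HF1 HG1)
                                    (Derive.is_derive_mult _ _ _ _ _ HF2 HG2)).
  + cbn. unfold minus, plus, opp, Re, Im; cbn. ring.
- eapply is_derive_eq_val.
  + exact (is_derive_plus _ _ _ _ _ (Derive.is_derive_mult _ _ _ _ _ HF1 HG2)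
                                   (Derive.is_derive_mult _ _ _ _ _ HF2 HG1)).
  + cbn. unfold plus, Re, Im; cbn. ring.
Qed.

Lemma is_derive_Cinv (F : R -> C) (x : R) (dF : C) :
  is_derive F x dF -> F x <> 0 ->
  is_derive (fun s => / F s) x (- dF / (F x * F x)).
Proof.
intros HF Hnz.
assert (HF1 := is_derive_Re _ _ _ HF). assert (HF2 := is_derive_Im _ _ _ HF).
assert (Hpos : (0 < Re (F x) ^ 2 + Im (F x) ^ 2)%R).
{ destruct (F x) as [p q]; cbn.
  destruct (Req_dec p 0) as [->|Hp].
  - assert (Hq : q <> 0%R) by (intros ->; now apply Hnz).
    pose proof (Rsqr_pos_lt q Hq). unfold Rsqr in *. nra.
  - pose proof (Rsqr_pos_lt p Hp). unfold Rsqr in *. nra. }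
assert (HN := is_derive_plus _ _ _ _ _ (is_derive_pow _ 2 _ _ HF1) (is_derive_pow _ 2 _ _ HF2)).
apply is_derive_C_parts; eapply is_derive_eq_val.
- exact (is_derive_div _ _ _ _ _ HF1 HN (Rgt_not_eq _ _ Hpos)).
- revert Hpos. unfold plus, Re, Im; cbn. destruct (F x) as [p q], dF as [dp dq]; cbn.
  intros Hpos. field. split; intro E; nra.
- exact (is_derive_div _ _ _ _ _ (is_derive_opp _ _ _ HF2) HN (Rgt_not_eq _ _ Hpos)).
- revert Hpos. unfold plus, opp, Re, Im; cbn. destruct (F x) as [p q], dF as [dp dq]; cbn.
  intros Hpos. field. split; intro E; nra.
Qed.

Lemma is_partial_eq_val (d : dir) (F : R -> R -> C) (x t : R) (l l' : C) :
  is_partial d F x t l -> l = l' -> is_partial d F x t l'.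
Proof. now intros H <-. Qed.

Lemma is_partial_ext (d : dir) (F G : R -> R -> C) (x t : R) (l : C) :
  (forall x' t', F x' t' = G x' t') -> is_partial d F x t l -> is_partial d G x t l.
Proof. intros E; destruct d; apply is_derive_ext; intros; apply E. Qed.

Lemma is_partial_const (d : dir) (c : C) (x t : R) :
  is_partial d (fun _ _ => c) x t 0.
Proof. destruct d; apply (@is_derive_const R_AbsRing C_R_NormedModule). Qed.

Lemma is_partial_Cplus (d : dir) (F G : R -> R -> C) (x t : R) (dF dG : C) :
  is_partial d F x t dF -> is_partial d G x t dG ->
  is_partial d (fun x t => F x t + G x t) x t (dF + dG).
Proof. destruct d; apply (@is_derive_plus R_AbsRing C_R_NormedModule). Qed.

Lemma is_partial_Copp (d : dir) (F : R -> R -> C) (x t : R) (dF : C) :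
  is_partial d F x t dF -> is_partial d (fun x t => - F x t) x t (- dF).
Proof. destruct d; apply (@is_derive_opp R_AbsRing C_R_NormedModule). Qed.

Lemma is_partial_Cmult (d : dir) (F G : R -> R -> C) (x t : R) (dF dG : C) :
  is_partial d F x t dF -> is_partial d G x t dG ->
  is_partial d (fun x t => F x t * G x t) x t (dF * G x t + F x t * dG).
Proof. destruct d; apply is_derive_Cmult. Qed.

Lemma is_partial_Cinv (d : dir) (F : R -> R -> C) (x t : R) (dF : C) :
  is_partial d F x t dF -> F x t <> 0 ->
  is_partial d (fun x t => / F x t) x t (- dF / (F x t * F x t)).
Proof. destruct d; apply (is_derive_Cinv (fun _ => _)). Qed.

Section PolynomialExpressions.

Variable A : Type.

Inductive pexpr : Type :=
  | PAtom (a : A)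
  | PConst (c : C)
  | PAdd (e1 e2 : pexpr)
  | PMul (e1 e2 : pexpr)
  | POpp (e : pexpr).

Variable val : A -> R -> R -> C.

Fixpoint peval (e : pexpr) (x t : R) : C :=
  match e with
  | PAtom a => val a x t
  | PConst c => c
  | PAdd e1 e2 => peval e1 x t + peval e2 x t
  | PMul e1 e2 => peval e1 x t * peval e2 x t
  | POpp e1 => - peval e1 x t
  end.

Variable datom : dir -> A -> pexpr.

Fixpoint pderiv (d : dir) (e : pexpr) : pexpr :=
  match e with
  | PAtom a => datom d a
  | PConst _ => PConst 0
  | PAdd e1 e2 => PAdd (pderiv d e1) (pderiv d e2)
  | PMul e1 e2 => PAdd (PMul (pderiv d e1) e2) (PMul e1 (pderiv d e2))
  | POpp e1 => POpp (pderiv d e1)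
  end.

Variable U : R -> R -> Prop.
Hypothesis is_partial_atom :
  forall a d x t, U x t -> is_partial d (val a) x t (peval (datom d a) x t).

Lemma is_partial_peval (e : pexpr) (d : dir) (x t : R) :
  U x t -> is_partial d (peval e) x t (peval (pderiv d e) x t).
Proof.
intros HU. induction e as [a|c|e1 IH1 e2 IH2|e1 IH1 e2 IH2|e1 IH1]; cbn.
- now apply is_partial_atom.
- apply is_partial_const.
- now apply is_partial_Cplus.
- now apply is_partial_Cmult.
- now apply is_partial_Copp.
Qed.

Lemma smooth_family_peval (e : pexpr) :
  smooth_family U (peval e) (fun ds => peval (fold_right pderiv e ds)).
Proof. split; [reflexivity | intros ds d x t HU; now apply is_partial_peval]. Qed.

End PolynomialExpressions.

Arguments PAtom {A} a.
Arguments PConst {A} c%_C_scope.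
Arguments PAdd {A} e1 e2.
Arguments PMul {A} e1 e2.
Arguments POpp {A} e.
Arguments peval {A} val e x t.
Arguments pderiv {A} datom d e.

Declare Scope pexpr_scope.
Delimit Scope pexpr_scope with pexpr.
Bind Scope pexpr_scope with pexpr.
Notation "e1 + e2" := (PAdd e1 e2) : pexpr_scope.
Notation "e1 - e2" := (PAdd e1 (POpp e2)) : pexpr_scope.
Notation "e1 * e2" := (PMul e1 e2) : pexpr_scope.
Notation "- e" := (POpp e) : pexpr_scope.

(* [Psi k], [Phi k], [F k] stand for psi_{n-k}, phi_{n-k}, f_{n-k} (zero when k > n):
   counted from the top, differentiation only raises k.  [InvTop] stands for 1/f_{n+1}. *)
Inductive unknown : Type := Psi (k : nat) | Phi (k : nat) | F (k : nat) | InvTop.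

Coercion PAtom_unknown (u : unknown) : pexpr unknown := PAtom u.

Definition a_expr : pexpr unknown := Psi 0 * InvTop.
Definition b_expr : pexpr unknown := - (Phi 0 * InvTop).
Definition c_expr : pexpr unknown :=
  PConst (2 * Ci) * (Psi 0 * F 0 * (InvTop * InvTop) - Psi 1 * InvTop).
Definition d_expr : pexpr unknown :=
  PConst (2 * Ci) * (Phi 0 * F 0 * (InvTop * InvTop) - Phi 1 * InvTop).

Definition unknown_deriv (d : dir) (u : unknown) : pexpr unknown :=
  match d, u with
  | Px, Psi k => PConst (2 * Ci) * a_expr * F k - PConst (2 * Ci) * Psi (S k)
  | Px, Phi k => PConst (2 * Ci) * b_expr * F k + PConst (2 * Ci) * Phi (S k)
  | Px, F k => PConst Ci * b_expr * Psi k + PConst Ci * a_expr * Phi k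
  | Pt, Psi k => PConst (-2) * c_expr * F k + PConst (4 * Ci) * a_expr * F (S k)
                 + PConst (2 * Ci) * a_expr * b_expr * Psi k - PConst (4 * Ci) * Psi (S (S k))
  | Pt, Phi k => PConst 2 * d_expr * F k + PConst (4 * Ci) * b_expr * F (S k)
                 - PConst (2 * Ci) * a_expr * b_expr * Phi k + PConst (4 * Ci) * Phi (S (S k))
  | Pt, F k => d_expr * Psi k - c_expr * Phi k
                + PConst (2 * Ci) * b_expr * Psi (S k) + PConst (2 * Ci) * a_expr * Phi (S k)
  | _, InvTop => PConst 0 (* f_{n+1} is constant: is_partial_f_top *)
  end.

Lemma coef_top_index (N : nat) (g : nat -> R -> R -> C) (i k : nat) (x t : R) :
  (k <= i)%nat -> (i - k <= N)%nat -> coef N g i k x t = g (i - k)%nat x t.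
Proof.
intros H1 H2. unfold coef.
now rewrite (proj2 (Nat.leb_le _ _) H1), (proj2 (Nat.leb_le _ _) H2).
Qed.

Lemma coef_below_zero (N : nat) (g : nat -> R -> R -> C) (i k : nat) (x t : R) :
  (i < k)%nat -> coef N g i k x t = 0.
Proof. intros H. unfold coef. now rewrite (proj2 (Nat.leb_gt _ _) H). Qed.

Lemma coef_above_range (N : nat) (g : nat -> R -> R -> C) (i k : nat) (x t : R) :
  (N < i - k)%nat -> coef N g i k x t = 0.
Proof.
intros H. unfold coef. now rewrite (proj2 (Nat.leb_gt _ _) H), Bool.andb_false_r.
Qed.

Lemma coef_shift (N : nat) (g : nat -> R -> R -> C) (i k m : nat) (x t : R) :
  (k <= i)%nat -> coef N g (i - k) m x t = coef N g i (k + m) x t.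
Proof.
intros H. unfold coef. replace (i - k - m)%nat with (i - (k + m))%nat by lia.
now destruct (Nat.leb_spec m (i - k)), (Nat.leb_spec (k + m) i); try lia.
Qed.

Lemma is_partial_coef_top (N : nat) (g : nat -> R -> R -> C) (i k : nat) (d : dir)
    (x t : R) (L : C) :
  (i <= N)%nat ->
  ((k <= i)%nat -> is_partial d (g (i - k)%nat) x t L) ->
  ((i < k)%nat -> L = 0) ->
  is_partial d (coef N g i k) x t L.
Proof.
intros HiN Hin Hout. destruct (Compare_dec.le_lt_dec k i) as [Hk|Hk].
- apply (is_partial_ext d (g (i - k)%nat)); [|now apply Hin].
  intros x' t'. symmetry. apply coef_top_index; lia.
- rewrite (Hout Hk). apply (is_partial_ext d (fun _ _ => 0)); [|apply is_partial_const].
  intros x' t'. symmetry. now apply coef_below_zero.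
Qed.

Section PolynomialSolution.

Variables (n : nat) (U : R -> R -> Prop) (f psi phi : nat -> R -> R -> C).
Hypothesis top_nonzero : forall x t, U x t -> f (S n) x t <> 0.
Hypothesis t_sys : forall x t, U x t -> t_system n f psi phi x t.
Hypothesis x_sys : forall x t, U x t -> x_system n f psi phi x t.

Definition unknown_val (u : unknown) : R -> R -> C :=
  match u with
  | Psi k => coef n psi n k
  | Phi k => coef n phi n k
  | F k => coef (S n) f n k
  | InvTop => fun x t => / f (S n) x t
  end.

Local Notation val := (peval unknown_val).

Lemma coef_top_f (x t : R) : coef (S n) f n 0 x t = f n x t.
Proof. rewrite coef_top_index by lia. now rewrite Nat.sub_0_r. Qed.

Local Ltac unknown_value_eq :=
  cbn [peval unknown_deriv unknown_val a_expr b_expr c_expr d_expr PAtom_unknown];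
  unfold coef_a, coef_b, coef_c, coef_d;
  rewrite ?Nat.add_0_r, ?Nat.add_1_r, ?(Nat.add_comm _ 2), ?coef_top_f; cbn [Nat.add];
  field; now apply top_nonzero.

Lemma is_partial_f_top (d : dir) (x t : R) : U x t -> is_partial d (f (S n)) x t 0.
Proof.
intros HU. destruct d.
- destruct (x_sys x t HU) as [Hf _]. eapply is_partial_eq_val; [apply Hf; lia|].
  now rewrite !(coef_above_range n _ (S n) 0) by lia; ring.
- destruct (t_sys x t HU) as [Hf _]. eapply is_partial_eq_val; [apply Hf; lia|].
  unfold coef_a, coef_b.
  rewrite !(coef_above_range n _ (S n) 0), !coef_top_index by lia.
  cbn [Nat.sub]; rewrite !Nat.sub_0_r.
  field. now apply top_nonzero.
Qed.

Local Ltac from_system H :=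
  eapply is_partial_eq_val; [apply H; lia | rewrite !coef_shift by lia; unknown_value_eq].

Local Ltac below_zero k :=
  cbn [peval unknown_deriv unknown_val a_expr b_expr c_expr d_expr PAtom_unknown];
  rewrite ?(coef_below_zero _ _ n k), ?(coef_below_zero _ _ n (S k)),
    ?(coef_below_zero _ _ n (S (S k))) by lia; ring.

Lemma is_partial_unknown (u : unknown) (d : dir) (x t : R) :
  U x t -> is_partial d (unknown_val u) x t (val (unknown_deriv d u) x t).
Proof.
intros HU.
destruct (x_sys x t HU) as [Hfx [Hpsix Hphix]], (t_sys x t HU) as [Hft [Hpsit Hphit]].
destruct u as [k|k|k|].
- destruct d; apply is_partial_coef_top; [lia | intros Hk | intros Hk | lia | intros Hk | intros Hk].
  + from_system Hpsix.
  + below_zero k.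
  + from_system Hpsit.
  + below_zero k.
- destruct d; apply is_partial_coef_top; [lia | intros Hk | intros Hk | lia | intros Hk | intros Hk].
  + from_system Hphix.
  + below_zero k.
  + from_system Hphit.
  + below_zero k.
- destruct d; apply is_partial_coef_top; [lia | intros Hk | intros Hk | lia | intros Hk | intros Hk].
  + from_system Hfx.
  + below_zero k.
  + from_system Hft.
  + below_zero k.
- eapply is_partial_eq_val.
  + apply is_partial_Cinv; [apply is_partial_f_top | apply top_nonzero]; exact HU.
  + destruct d; cbn [peval unknown_deriv]; unfold Cdiv; ring.
Qed.

Lemma nls_identities (x t : R) : f (S n) x t <> 0 ->
  let a := coef_a n f psi x t in
  let b := coef_b n f phi x t in
  Ci * val (pderiv unknown_deriv Pt a_expr) x t
    + val (pderiv unknown_deriv Px (pderiv unknown_deriv Px a_expr)) x t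
    + 2 * (a * a) * b = 0 /\
  Ci * val (pderiv unknown_deriv Pt b_expr) x t
    - val (pderiv unknown_deriv Px (pderiv unknown_deriv Px b_expr)) x t
    - 2 * (b * b) * a = 0.
Proof.
intros Hnz a b. subst a b.
assert (Ci_sqr : Ci * Ci = -1) by (apply injective_projections; cbn; ring).
cbn [pderiv peval unknown_deriv unknown_val a_expr b_expr c_expr d_expr PAtom_unknown].
unfold coef_a, coef_b.
split; field [Ci_sqr]; exact Hnz.
Qed.

End PolynomialSolution.

Theorem theorem1 (n : nat) (U : R -> R -> Prop) (f psi phi : nat -> R -> R -> C) :
  open2 U ->
  (forall x t, U x t -> f (S n) x t <> 0) ->
  (forall x t, U x t -> t_system n f psi phi x t) ->
  (forall x t, U x t -> x_system n f psi phi x t) ->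
  let a := coef_a n f psi in
  let b := coef_b n f phi in
  exists Da Db : list dir -> R -> R -> C,
    smooth_family U a Da /\ smooth_family U b Db /\
    (forall x t, U x t ->
       Ci * Da (Pt :: nil) x t + Da (Px :: Px :: nil) x t
         + 2 * (a x t * a x t) * b x t = 0 /\
       Ci * Db (Pt :: nil) x t - Db (Px :: Px :: nil) x t
         - 2 * (b x t * b x t) * a x t = 0).
Proof.
intros _ Hnz Ht Hx a b.
pose (derivs e ds := peval (unknown_val n f psi phi) (fold_right (pderiv unknown_deriv) e ds)).
exists (derivs a_expr), (derivs b_expr).
split; [|split].
- exact (smooth_family_peval _ _ _ _ (is_partial_unknown n U f psi phi Hnz Ht Hx) a_expr).
- exact (smooth_family_peval _ _ _ _ (is_partial_unknown n U f psi phi Hnz Ht Hx) b_expr).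
- intros x t HU. exact (nls_identities n f psi phi x t (Hnz x t HU)).
Qed.
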